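(* Let $A$ and $B$ be observed binary variables. Every functional causal structure over $A,B$ whose latent variables are discrete with finitely many values (not necessarily binary) is observationally equivalent to a functional causal structure over $A,B$ all of whose latent variables are binary. Equivalently, every observational equivalence class of such functional causal structures contains one in which all latent variables are binary.
   Context: A functional causal structure over observed variables $A,B$ is a directed acyclic graph together with a specification of each observed variable as a function of its causal parents; all latent (unobserved) variables are parentless. A causal model is a functional causal structure together with a probability distribution over the values of each (independent) latent variable; each causal model induces a joint distribution $\mathbb{P}(A,B)$. By convention latent variables are nontrivial: every value of every latent variable has probability strictly between $0$ and $1$. The set of joint distributions of a functional causal structure is the set of all $\mathbb{P}(A,B)$ arising from some choice of such latent distributions. Two functional causal structures are observationally equivalent if they have the same set of joint distributions over the observed variables. *)

From HB Require Import structures.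
From mathcomp Require Import all_boot all_order all_algebra.
From mathcomp Require Import reals.
Unset Printing Implicit Defensive.
Import Order.TTheory GRing.Theory Num.Theory.
Local Open Scope ring_scope.

(* Causal relation between the two observed binary variables A and B
   (the DAG restricted to the observed nodes must be acyclic). *)
Inductive obs_edge := NoEdge | AtoB | BtoA.

(* Latents are parentless; paA i / paB i say whether latent i is a parent of
   A / B.  fA l b gives A from the latent values l and the value b of B; it may
   only depend on the latent parents of A, and on b only if B -> A.
   Symmetrically for fB. *)
Record fcs := FCS {
  nlat : nat;
  lcard : 'I_nlat -> nat;
  lcard_ge2 : forall i, (2 <= lcard i)%N;
  edge : obs_edge;
  paA : 'I_nlat -> bool;
  paB : 'I_nlat -> bool;
  fA : {dffun forall i : 'I_nlat, 'I_(lcard i)} -> bool -> bool;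
  fB : {dffun forall i : 'I_nlat, 'I_(lcard i)} -> bool -> bool;
  fA_local : forall (l l' : {dffun forall i : 'I_nlat, 'I_(lcard i)}) b, (forall i, paA i -> l i = l' i) -> fA l b = fA l' b;
  fB_local : forall (l l' : {dffun forall i : 'I_nlat, 'I_(lcard i)}) a, (forall i, paB i -> l i = l' i) -> fB l a = fB l' a;
  fA_obs : edge <> BtoA -> forall l b b', fA l b = fA l b';
  fB_obs : edge <> AtoB -> forall l a a', fB l a = fB l a'
}.

Definition assign (S : fcs) := {dffun forall i : 'I_(nlat S), 'I_(lcard S i)}.

Definition obs (S : fcs) (l : assign S) : bool * bool :=
  match edge S with
  | NoEdge => (fA S l false, fB S l false)
  | AtoB => let a := fA S l false in (a, fB S l a)
  | BtoA => let b := fB S l false in (fA S l b, b)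
  end.

Definition latent_dist (R : realType) (S : fcs)
    (p : forall i : 'I_(nlat S), 'I_(lcard S i) -> R) : Prop :=
  (forall i x, 0 < p i x < 1) /\ (forall i, \sum_(x : 'I_(lcard S i)) p i x = 1).

Definition joint (R : realType) (S : fcs)
    (p : forall i : 'I_(nlat S), 'I_(lcard S i) -> R) (a b : bool) : R :=
  \sum_(l : assign S) (\prod_(i < nlat S) p i (l i)) * ((obs S l == (a, b)))%:R.

Definition dists (R : realType) (S : fcs) (P : bool -> bool -> R) : Prop :=
  exists p, latent_dist R S p /\ forall a b, P a b = joint R S p a b.

Definition obs_equiv (R : realType) (S S' : fcs) : Prop :=
  forall P : bool -> bool -> R, dists R S P <-> dists R S' P.

From mathcomp Require Import all_boot all_order all_algebra.
From mathcomp Require Import reals.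
From mathcomp Require Import ring.
Import Order.TTheory GRing.Theory Num.Theory.
Local Open Scope ring_scope.

Set Implicit Arguments.
Unset Strict Implicit.
Unset Printing Implicit Defensive.

(* A latent variable with c values is simulated by a block of K >= c
   independent binary latents through stick breaking: the decoded value is
   the position j < c.-1 of the first bit equal to 1, or c.-1 if the first
   c.-1 bits are all 0.  Making bit j equal to 1 with probability
   p_j / (p_j + ... + p_(c-1)) reproduces any nontrivial law p, and
   conversely nontrivial bits always decode to a nontrivial law.  Replacing
   every latent by such a block, and letting A and B read the decoded values,
   gives a structure with binary latents and the same joint distributions. *)

Section StickCode.

Variables K c : nat.

Definition stick_bit (x j : nat) (b : 'I_2) : bool :=
  if (j < x)%N then val b == 0%N
  else if (j == x) && (x < c.-1)%N then val b == 1%N else true.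

Definition stick_code (x : nat) (w : {ffun 'I_K -> 'I_2}) : bool :=
  [forall j : 'I_K, stick_bit x j (w j)].

Lemma stick_bit_exists x j : exists b, stick_bit x j b.
Proof.
rewrite /stick_bit; case: (j < x)%N; first by exists ord0.
by case: (_ && _); [exists (@Ordinal 2 1 isT) | exists ord0].
Qed.

Lemma bit2_eq0 (b : 'I_2) : val b != 1%N -> val b == 0%N.
Proof. by case: b => [[|[|]]]. Qed.

Lemma stick_code_exists (w : {ffun 'I_K -> 'I_2}) :
  (0 < c)%N -> exists x : 'I_c, stick_code x w.
Proof.
move=> c_gt0; pose P (j : 'I_K) := (j < c.-1)%N && (val (w j) == 1%N).
have [j0 Pj0|noP] := pickP P.
  have [j /andP[jc wj1] jmin] := arg_minnP (fun j : 'I_K => nat_of_ord j) Pj0.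
  exists (Ordinal (leq_trans jc (leq_pred c))); apply/forallP => k.
  rewrite /stick_bit /=; case: ifP => kj.
    apply/bit2_eq0/negP => wk1.
    by have := jmin k; rewrite /P (ltn_trans kj jc) wk1 leqNgt kj => /(_ isT).
  by case: ifP => //= /andP[/eqP/val_inj -> _].
have cc : (c.-1 < c)%N by rewrite ltn_predL.
exists (Ordinal cc); apply/forallP => k.
rewrite /stick_bit /= ltnn andbF; case: ifP => // kc.
apply/bit2_eq0/negP => wk1; by have := noP k; rewrite /P kc wk1.
Qed.

Hypothesis c_le_K : (c <= K)%N.

Lemma stick_code_inj (w : {ffun 'I_K -> 'I_2}) (x y : 'I_c) :
  stick_code x w -> stick_code y w -> x = y.
Proof.
wlog xy : x y / (x <= y)%N => [hwlog|].
  by case: (leqP x y) => [|/ltnW] xy hx hy; [|symmetry]; apply: hwlog.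
move: xy; rewrite leq_eqVlt => /orP[/eqP/val_inj //|xy] /forallP hx /forallP hy.
have xK : (x < K)%N := leq_trans (ltn_ord x) c_le_K.
have yc : (y <= c.-1)%N by rewrite -ltnS prednK ?ltn_ord // (leq_ltn_trans _ (ltn_ord y)).
have := hx (Ordinal xK); have := hy (Ordinal xK).
by rewrite /stick_bit /= xy ltnn eqxx (leq_trans xy yc) => /eqP ->.
Qed.

Definition stick_decode (x0 : 'I_c) (w : {ffun 'I_K -> 'I_2}) : 'I_c :=
  odflt x0 [pick x : 'I_c | stick_code x w].

Lemma stick_decodeE x0 w (x : 'I_c) : (stick_decode x0 w == x) = stick_code x w.
Proof.
rewrite /stick_decode; case: pickP => [y wy|none] /=.
  by apply/eqP/idP => [<- //|wx]; apply: stick_code_inj wy wx.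
have [z wz] := stick_code_exists w (leq_ltn_trans (leq0n _) (ltn_ord x0)).
by have := none z; rewrite wz.
Qed.

End StickCode.

Definition bern (R : numDomainType) (t : R) (b : 'I_2) : R :=
  if val b == 1%N then t else 1 - t.

Lemma bern_sum1 (R : numDomainType) (t : R) : \sum_b bern t b = 1.
Proof. by rewrite !big_ord_recl big_ord0 /bern /= addr0 subrK. Qed.

Lemma bern_gt0_lt1 (R : numDomainType) (t : R) b : 0 < t < 1 -> 0 < bern t b < 1.
Proof.
case/andP=> t0 t1; rewrite /bern; case: ifP; rewrite ?t0 ?t1 //.
by rewrite subr_gt0 t1 ltrBlDr ltrDl.
Qed.

Lemma sum_stick_bit_bern (R : numDomainType) c x j (t : R) :
  \sum_b (stick_bit c x j b)%:R * bern t b =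
  if (j < x)%N then 1 - t else if (j == x) && (x < c.-1)%N then t else 1.
Proof.
rewrite !big_ord_recl big_ord0 /stick_bit /bern /=.
case: (j < x)%N; first by rewrite mul1r mul0r !addr0.
case: (_ && _); first by rewrite mul0r mul1r add0r addr0.
by rewrite !mul1r addr0 subrK.
Qed.

Section StickBreaking.

Variables (R : numFieldType) (c : nat) (p : 'I_c -> R).

Definition mass_at (j : nat) : R := \sum_(y : 'I_c | val y == j) p y.

Definition mass_rest (j : nat) : R := 1 - \sum_(y : 'I_c | (y < j)%N) p y.

(* For j >= c.-1 the ratio is arbitrary: those bits do not affect decoding. *)
Definition stick_ratio (j : nat) : R :=
  if (j < c.-1)%N then mass_at j / mass_rest j else 2^-1.

Lemma mass_at_ord (x : 'I_c) : mass_at x = p x.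
Proof. by rewrite /mass_at (eq_bigl (pred1 x)) ?big_pred1_eq. Qed.

Lemma mass_restS j : mass_rest j.+1 = mass_rest j - mass_at j.
Proof.
rewrite /mass_rest /mass_at (bigID (fun y : 'I_c => (y < j)%N)) /= opprD addrA.
congr (_ - _ - _); apply: eq_bigl => y; rewrite ltnS.
  by rewrite andb_idl // => /ltnW.
by rewrite -leqNgt -eqn_leq.
Qed.

Hypotheses (p_gt0 : forall x, 0 < p x) (p_sum1 : \sum_x p x = 1) (c_gt0 : (0 < c)%N).

Lemma mass_restE j : mass_rest j = \sum_(y : 'I_c | (j <= y)%N) p y.
Proof.
rewrite /mass_rest -p_sum1 (bigID (fun y : 'I_c => (y < j)%N)) /= addrC addrK.
by apply: eq_bigl => y; rewrite -leqNgt.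
Qed.

Lemma mass_rest_gt0 j : (j <= c.-1)%N -> 0 < mass_rest j.
Proof.
move=> jc; have cc : (c.-1 < c)%N by rewrite ltn_predL.
rewrite mass_restE (bigD1 (Ordinal cc)) //=.
by apply: ltr_pwDl => //; apply: sumr_ge0 => y _; apply: ltW.
Qed.

Lemma stick_ratio_gt0_lt1 j : 0 < stick_ratio j < 1.
Proof.
rewrite /stick_ratio; case: ifP => jc; last first.
  by rewrite invr_gt0 ltr0n invf_lt1 // ltr1n.
have jc' : (j < c)%N := leq_trans jc (leq_pred c).
have p_j : mass_at j = p (Ordinal jc') by rewrite -mass_at_ord.
have r0 := mass_rest_gt0 (ltnW jc).
have := mass_rest_gt0 jc; rewrite mass_restS subr_gt0 => r1.
by rewrite divr_gt0 ?p_j //= ltr_pdivrMr // mul1r -p_j.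
Qed.

Lemma prod_stick_ratio m : (m <= c.-1)%N ->
  \prod_(0 <= j < m) (1 - stick_ratio j) = mass_rest m.
Proof.
elim: m => [_|m IH mc].
  by rewrite big_nil /mass_rest big_pred0 ?subr0.
rewrite big_nat_recr //= IH ?(ltnW mc) // mass_restS /stick_ratio mc.
by field; rewrite gt_eqF ?mass_rest_gt0 ?(ltnW mc).
Qed.

Lemma stick_breaking_prod K (x : 'I_c) : (c <= K)%N ->
  \prod_(j < K) \sum_b (stick_bit c x j b)%:R * bern (stick_ratio j) b = p x.
Proof.
move=> cK; under eq_bigr do rewrite sum_stick_bit_bern.
pose G j := if (j < x)%N then 1 - stick_ratio j
            else if (j == x) && (x < c.-1)%N then stick_ratio j else 1.
rewrite -/(\prod_(j < K) G j).
have xK : (x <= K)%N := ltnW (leq_trans (ltn_ord x) cK).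
have xc : (x <= c.-1)%N by rewrite -ltnS prednK.
rewrite -(big_mkord xpredT G) (@big_cat_nat _ _ _ x 0 K _ _ (leq0n x) xK) /=.
rewrite (@eq_big_nat _ _ _ 0 x _ (fun j => 1 - stick_ratio j)); last first.
  by move=> j /andP[_ jx]; rewrite /G jx.
rewrite prod_stick_ratio // big_ltn ?(leq_trans (ltn_ord x)) //.
rewrite big_nat_cond big1 => [|j /andP[/andP[xj _] _]]; last first.
  by rewrite /G ltnNge (ltnW xj) gtn_eqF.
rewrite /G ltnn eqxx mulr1 /=; case: ifP => [xc1|/negbT].
  rewrite /stick_ratio xc1 mass_at_ord.
  by field; rewrite gt_eqF ?mass_rest_gt0.
rewrite -leqNgt => cx; have x_last : val x = c.-1 by apply/eqP; rewrite eqn_leq xc.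
rewrite mulr1 mass_restE (bigD1 x) //= big1 ?addr0 // => y /andP[xy /eqP yx].
by case: yx; apply/val_inj/eqP; rewrite eqn_leq xy andbT x_last -ltnS prednK ?ltn_ord.
Qed.

End StickBreaking.

Section DecodeLaw.

Variables (R : numDomainType) (K c : nat) (x0 : 'I_c) (q : 'I_K -> 'I_2 -> R).

Definition decode_law (x : 'I_c) : R :=
  \sum_(w | stick_decode x0 w == x) \prod_j q j (w j).

Lemma decode_lawE (x : 'I_c) : (c <= K)%N ->
  decode_law x = \prod_(j < K) \sum_b (stick_bit c x j b)%:R * q j b.
Proof.
move=> cK; rewrite bigA_distr_bigA /decode_law big_mkcond /=; apply: eq_bigr => w _.
rewrite stick_decodeE //; case: ifPn => [/forallP code_x|].
  by apply: eq_bigr => j _; rewrite code_x mul1r.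
rewrite negb_forall => /existsP[j not_j].
by rewrite (bigD1 j) //= (negbTE not_j) !mul0r.
Qed.

Hypothesis q_sum1 : forall j, \sum_b q j b = 1.

Lemma decode_law_sum1 : \sum_x decode_law x = 1.
Proof.
have -> : 1 = \sum_(w : {ffun 'I_K -> 'I_2}) \prod_j q j (w j).
  by rewrite -bigA_distr_bigA big1.
by rewrite (partition_big (stick_decode x0) xpredT).
Qed.

Hypothesis q_gt0 : forall j b, 0 < q j b.

Lemma decode_law_gt0 (x : 'I_c) : (c <= K)%N -> 0 < decode_law x.
Proof.
move=> cK; rewrite decode_lawE //; apply: prodr_gt0 => j _.
have [b bit_b] := stick_bit_exists c x j.
rewrite (bigD1 b) //= bit_b mul1r ltr_pwDl //.
by apply: sumr_ge0 => b' _; rewrite mulr_ge0 ?ler0n ?ltW.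
Qed.

End DecodeLaw.

Lemma sum_prod_pushforward (R : comPzSemiRingType) (I : finType) (X : I -> finType)
    (Y : finType) (d : forall i, Y -> X i) (w : I -> Y -> R)
    (G : {dffun forall i, X i} -> R) :
  \sum_(x : {dffun forall i, X i}) (\prod_i \sum_(y | d i y == x i) w i y) * G x
  = \sum_(r : {ffun I -> Y}) (\prod_i w i (r i)) * G (finfun (fun i => d i (r i))).
Proof.
pose dr (r : {ffun I -> Y}) : {dffun forall i, X i} := finfun (fun i => d i (r i)).
have prod_ind (r : {ffun I -> Y}) (x : {dffun forall i, X i}) :
    \prod_i (d i (r i) == x i)%:R = (dr r == x)%:R :> R.
  case: eqP => [<- | ne]; first by rewrite big1 // => i _; rewrite /dr ffunE eqxx.
  have [i ne_i] : exists i, d i (r i) != x i.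
    apply/existsP; rewrite -negb_forall; apply: contra_notN ne => /forallP eq_i.
    by apply/ffunP => i; rewrite ffunE (eqP (eq_i i)).
  by rewrite (bigD1 i) //= (negbTE ne_i) mul0r.
transitivity (\sum_x \sum_r (dr r == x)%:R * \prod_i w i (r i) * G x).
  apply: eq_bigr => x _; rewrite -big_distrl /=; congr (_ * _).
  under eq_bigr do rewrite big_mkcond.
  rewrite bigA_distr_bigA; apply: eq_bigr => r _.
  rewrite -prod_ind -big_split; apply: eq_bigr => i _ /=.
  by case: (_ == _); rewrite ?mul1r ?mul0r.
rewrite exchange_big; apply: eq_bigr => r _.
rewrite (bigD1 (dr r)) //= eqxx mul1r [X in _ + X]big1 ?addr0 // => x /negbTE.
by rewrite eq_sym => ->; rewrite !mul0r.
Qed.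

Section Binarize.

Variable S : fcs.

Definition width : nat := (\max_(i < nlat S) lcard S i)%N.

Lemma lcard_le_width i : (lcard S i <= width)%N.
Proof. exact: leq_bigmax. Qed.

Definition bit_index : finType := ('I_(nlat S) * 'I_width)%type.

Definition bit_of i j : 'I_#|bit_index| := enum_rank ((i, j) : bit_index).

Definition bit_rows := {ffun 'I_(nlat S) -> {ffun 'I_width -> 'I_2}}.

Definition bit_assign := {dffun forall k : 'I_#|bit_index|, 'I_2}.

Definition rows_of (l : bit_assign) : bit_rows := [ffun i => [ffun j => l (bit_of i j)]].

Definition lat0 i : 'I_(lcard S i) := Ordinal (ltnW (lcard_ge2 S i)).

Definition decode_rows (r : bit_rows) : assign S :=
  finfun (fun i => stick_decode (lat0 i) (r i)).

Definition decode (l : bit_assign) : assign S := decode_rows (rows_of l).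

Lemma decode_local (P : pred 'I_(nlat S)) (l l' : bit_assign) :
  (forall k, P (enum_val k).1 -> l k = l' k) ->
  forall i, P i -> decode l i = decode l' i.
Proof.
move=> eq_ll' i Pi; rewrite /decode /decode_rows !ffunE; congr stick_decode.
by apply/ffunP => j; rewrite !ffunE eq_ll' // enum_rankK.
Qed.

Definition binarize : fcs.
refine (@FCS #|bit_index| (fun _ => 2%N) (fun _ => leqnn 2) (edge S)
  (fun k => paA S (enum_val k).1) (fun k => paB S (enum_val k).1)
  (fun l => fA S (decode l)) (fun l => fB S (decode l)) _ _ _ _).
- by move=> l l' b eq_ll'; apply: fA_local; apply: decode_local.
- by move=> l l' a eq_ll'; apply: fB_local; apply: decode_local.
- by move=> noBA l; apply: fA_obs.
- by move=> noAB l; apply: fB_obs.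
Defined.

End Binarize.

Section BinarizeJoint.

Variables (R : realType) (S : fcs).

Definition rows_assign (r : bit_rows S) : bit_assign S :=
  [ffun k => r (enum_val k).1 (enum_val k).2].

Lemma rows_assignK : cancel rows_assign (@rows_of S).
Proof. by move=> r; apply/ffunP => i; apply/ffunP => j; rewrite !ffunE enum_rankK. Qed.

Lemma rows_ofK : cancel (@rows_of S) rows_assign.
Proof. by move=> l; apply/ffunP => k; rewrite !ffunE /bit_of -surjective_pairing enum_valK. Qed.

Lemma prod_bits (F : 'I_#|bit_index S| -> R) :
  \prod_k F k = \prod_i \prod_j F (bit_of i j).
Proof.
rewrite pair_bigA (reindex (@enum_val (bit_index S) predT)) /=; last first.
  by exists enum_rank => k _; [apply: enum_valK | apply: enum_rankK].
by apply: eq_bigr => k _; rewrite /bit_of -surjective_pairing enum_valK.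
Qed.

Definition bit_law (q : 'I_#|bit_index S| -> 'I_2 -> R) i : 'I_(lcard S i) -> R :=
  decode_law (lat0 i) (fun j => q (bit_of i j)).

Lemma joint_binarize q a b : joint R (binarize S) q a b = joint R S (bit_law q) a b.
Proof.
rewrite /joint (reindex rows_assign); last first.
  by exists (@rows_of S) => x _; [apply: rows_assignK | apply: rows_ofK].
rewrite sum_prod_pushforward.
apply: eq_bigr => r _; rewrite prod_bits /obs /= /decode rows_assignK.
by congr (_ * _); apply: eq_bigr => i _; apply: eq_bigr => j _; rewrite ffunE enum_rankK.
Qed.

Lemma eq_joint (p p' : forall i : 'I_(nlat S), 'I_(lcard S i) -> R) a b :
  (forall i x, p i x = p' i x) -> joint R S p a b = joint R S p' a b.
Proof.
by move=> eq_pp'; apply: eq_bigr => l _; congr (_ * _); apply: eq_bigr => i _.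
Qed.

Lemma bit_law_stick_breaking (p : forall i : 'I_(nlat S), 'I_(lcard S i) -> R) :
    latent_dist R S p ->
  forall i x,
  bit_law (fun k => bern (stick_ratio (p (enum_val k).1) (enum_val k).2)) x = p i x.
Proof.
move=> [p_bnd p_sum1] i x; rewrite /bit_law decode_lawE ?lcard_le_width //.
under eq_bigr do under eq_bigr do rewrite /bit_of enum_rankK /=.
have p_gt0 y : 0 < p i y by case/andP: (p_bnd i y).
by have := stick_breaking_prod p_gt0 (p_sum1 i) (ltnW (lcard_ge2 S i)) x (lcard_le_width i).
Qed.

End BinarizeJoint.

Lemma lt1_of_sum1 (R : numDomainType) (I : finType) (p : I -> R) :
  (1 < #|I|)%N -> (forall x, 0 < p x) -> \sum_x p x = 1 -> forall x, p x < 1.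
Proof.
move=> I2 p_gt0 <- x; have [y yx] : exists y, y != x.
  apply/existsP; rewrite -negb_forall; apply: contraTN I2 => /forallP all_x.
  by rewrite -leqNgt; apply/card_le1_eqP => y z _ _; rewrite (eqP (all_x y)) (eqP (all_x z)).
rewrite (bigD1 x) //= (bigD1 y) //= ltrDl ltr_pwDl //.
by apply: sumr_ge0 => z _; apply: ltW.
Qed.

Section BinarizeDists.

Variables (R : realType) (S : fcs).

Lemma dists_binarize P : dists R S P -> dists R (binarize S) P.
Proof.
move=> [p [p_dist P_joint]]; have [p_bnd p_sum1] := p_dist.
exists (fun k : 'I_#|bit_index S| =>
          bern (stick_ratio (p (enum_val k).1) (enum_val k).2)); split.
  split=> [k b | k]; last exact: bern_sum1.
  have p_gt0 y : 0 < p (enum_val k).1 y by case/andP: (p_bnd _ y).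
  exact/bern_gt0_lt1/(stick_ratio_gt0_lt1 p_gt0 (p_sum1 _) (ltnW (lcard_ge2 S _))).
move=> a b; rewrite P_joint joint_binarize.
by apply: eq_joint => i x; rewrite bit_law_stick_breaking.
Qed.

Lemma dists_of_binarize P : dists R (binarize S) P -> dists R S P.
Proof.
move=> [q [[q_bnd q_sum1] P_joint]].
have q_gt0 k b : 0 < q k b by case/andP: (q_bnd k b).
have law_sum1 i : \sum_(x : 'I_(lcard S i)) bit_law q x = 1.
  by apply: decode_law_sum1 => j; apply: q_sum1.
have law_gt0 i (x : 'I_(lcard S i)) : 0 < bit_law q x.
  exact: decode_law_gt0 (lcard_le_width i).
exists (bit_law q); split; last by move=> a b; rewrite P_joint joint_binarize.
split=> [i x|]; last exact: law_sum1.
by rewrite law_gt0 (lt1_of_sum1 _ (law_gt0 i)) ?card_ord ?lcard_ge2.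
Qed.

End BinarizeDists.

Unset Implicit Arguments.

Theorem theorem1 (R : realType) (S : fcs) :
  exists S' : fcs, (forall i, lcard S' i = 2%N) /\ obs_equiv R S S'.
Proof.
exists (binarize S); split=> // P; split; [exact: dists_binarize | exact: dists_of_binarize].
Qed.
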